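(* The alternating oriented matroid $C^{6,4}$ is not pure.
   Context: The alternating oriented matroid $C^{n,d}$ on $[n]$ has as circuits exactly the signed sets $(I^{odd},I^{even})$ and $(I^{even},I^{odd})$, where $I=\{i_1<\dots<i_{d+1}\}$ ranges over $(d+1)$-subsets of $[n]$, $I^{odd}=\{i_1,i_3,\dots\}$, $I^{even}=\{i_2,i_4,\dots\}$. Two subsets $I,J\subseteq[n]$ are separated if no circuit $X$ satisfies $X^+\subseteq I\setminus J$, $X^-\subseteq J\setminus I$; an oriented matroid is pure if every pairwise-separated collection of subsets that is maximal by inclusion has the maximum possible cardinality among pairwise-separated collections. *)

From mathcomp Require Import all_boot.
Set Implicit Arguments. Unset Strict Implicit. Unset Printing Implicit Defensive.

(* Ground set [n] is modelled by 'I_n (elements 0..n-1, same order). *)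

(* Position (1-based) of i within I = #{ j in I | j <= i }. *)
Definition rank_in (n : nat) (I : {set 'I_n}) (i : 'I_n) : nat :=
  #|[set j in I | j <= i]|.

Definition odd_part (n : nat) (I : {set 'I_n}) : {set 'I_n} :=
  [set i in I | odd (rank_in I i)].
Definition even_part (n : nat) (I : {set 'I_n}) : {set 'I_n} :=
  [set i in I | ~~ odd (rank_in I i)].

(* Signed sets are pairs (X^+, X^-). Circuits of the alternating oriented
   matroid C^{n,d}: (I^odd, I^even) and (I^even, I^odd), |I| = d+1. *)
Definition alt_circuit (n d : nat) : pred ({set 'I_n} * {set 'I_n}) := fun X =>
  [exists I : {set 'I_n},
    (#|I| == d.+1) &&
    ((X == (odd_part I, even_part I)) || (X == (even_part I, odd_part I)))].

Definition separated (n : nat) (circ : pred ({set 'I_n} * {set 'I_n}))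
  (I J : {set 'I_n}) : bool :=
  ~~ [exists X : {set 'I_n} * {set 'I_n},
        circ X && (X.1 \subset I :\: J) && (X.2 \subset J :\: I)].

Definition pairwise_separated (n : nat) (circ : pred ({set 'I_n} * {set 'I_n}))
  (S : {set {set 'I_n}}) : bool :=
  [forall I in S, forall J in S, (I != J) ==> separated circ I J].

Definition pure (n : nat) (circ : pred ({set 'I_n} * {set 'I_n})) : Prop :=
  forall S : {set {set 'I_n}},
    maxset (pairwise_separated circ) S ->
    forall T : {set {set 'I_n}}, pairwise_separated circ T -> #|T| <= #|S|.

From mathcomp Require Import all_boot.

Set Implicit Arguments. Unset Strict Implicit. Unset Printing Implicit Defensive.

(* Two explicit collections of subsets of [6] witness non-purity (elements are
   written 0..5 below): the 55 subsets other than 13, 24, 024, 025, 035, 124,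
   134, 135, 0235 are pairwise separated, and each of the nine omitted sets is
   non-separated from one of them, so the collection is inclusion-maximal; yet
   the 57 subsets other than 14, 24, 024, 025, 124, 0235, 0245 are pairwise
   separated too.  Both claims are finite checks, carried out by evaluation
   after describing subsets of 'I_n by bit sequences of length n. *)

Fixpoint bitseqs (m : nat) : seq bitseq :=
  if m is m'.+1 then [seq b :: s | b <- [:: true; false], s <- bitseqs m']
  else [:: [::]].

Lemma mem_bitseqs m bs : (bs \in bitseqs m) = (size bs == m).
Proof.
elim: m bs => [|m IHm] [|b bs] //.
- by apply/allpairsP => -[[c s] /= [_ _]].
- rewrite eqSS -IHm; apply/allpairsP/idP => [[[c s] /= [_ s_in [_ ->]]] // | bs_in].
  by exists (b, bs); case: b.
Qed.

Lemma separated_alt_circuitE n d (I J : {set 'I_n}) :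
  separated (@alt_circuit n d) I J =
  ~~ [exists K : {set 'I_n}, (#|K| == d.+1) &&
      ((odd_part K \subset I :\: J) && (even_part K \subset J :\: I)
       || (even_part K \subset I :\: J) && (odd_part K \subset J :\: I))].
Proof.
congr negb; apply/existsP/existsP => [[X]|[K /andP[cardK]]].
- case/andP=> /andP[/existsP[K /andP[cardK X_K]] XI] XJ; exists K.
  by case/orP: X_K XI XJ => /eqP -> /= -> ->; rewrite cardK ?orbT.
- case/orP=> /andP[KI KJ]; [exists (odd_part K, even_part K) | exists (even_part K, odd_part K)];
  by rewrite KI KJ !andbT; apply/existsP; exists K; rewrite cardK eqxx ?orbT.
Qed.

Lemma maxset_pairwise_separated n (circ : pred ({set 'I_n} * {set 'I_n}))
    (S : {set {set 'I_n}}) :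
  pairwise_separated circ S ->
  (forall A, A \notin S -> exists2 B, B \in S & ~~ separated circ A B) ->
  maxset (pairwise_separated circ) S.
Proof.
move=> sepS maxS; apply/maxsetP; split=> // T sepT sST.
apply/eqP; rewrite eq_sym eqEsubset sST; apply/subsetP => A AT.
apply/negPn/negP => AS; have [B BS nsepAB] := maxS A AS.
have AB : A != B by apply: contraNneq AS => ->.
move/forallP/(_ A): sepT; rewrite AT => /forallP/(_ B).
by rewrite (subsetP sST) //= AB (negbTE nsepAB).
Qed.

Section SubsetsAsPredicates.
Variable n : nat.

Definition set_of_pred (f : pred nat) : {set 'I_n} := [set i : 'I_n | f i].
Definition bits_of (A : {set 'I_n}) : bitseq := [seq i \in A | i <- enum 'I_n].

Lemma bits_ofK : cancel bits_of (fun bs => set_of_pred (nth false bs)).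
Proof.
by move=> A; apply/setP => i; rewrite inE (nth_map i) ?size_enum_ord // nth_ord_enum.
Qed.

Lemma bits_of_set_of_pred f : bits_of (set_of_pred f) = [seq f i | i <- iota 0 n].
Proof. by rewrite -val_enum_ord -map_comp; apply: eq_map => i; rewrite inE. Qed.

Lemma bits_of_set_of_nth bs : size bs = n -> bits_of (set_of_pred (nth false bs)) = bs.
Proof. by move=> size_bs; rewrite bits_of_set_of_pred -size_bs map_nth_iota0 ?take_size. Qed.

Lemma bits_of_bitseqs A : bits_of A \in bitseqs n.
Proof. by rewrite mem_bitseqs size_map size_enum_ord. Qed.

Lemma set_of_bitsP (A : {set 'I_n}) :
  exists2 bs, bs \in bitseqs n & A = set_of_pred (nth false bs).
Proof. by exists (bits_of A); rewrite ?bits_ofK ?bits_of_bitseqs. Qed.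

Definition sub_pred (f g : pred nat) : bool := all [pred i | f i ==> g i] (iota 0 n).
Definition rank_pred (f : pred nat) (i : nat) : nat :=
  count [pred j | f j && (j <= i)] (iota 0 n).
Definition odd_pred (f : pred nat) : pred nat := [pred i | f i && odd (rank_pred f i)].
Definition even_pred (f : pred nat) : pred nat :=
  [pred i | f i && ~~ odd (rank_pred f i)].

Lemma card_set_of_pred f : #|set_of_pred f| = count f (iota 0 n).
Proof.
rewrite cardE /enum_mem -enumT size_filter -val_enum_ord count_map.
by apply: eq_count => i; rewrite /= inE.
Qed.

Lemma subset_set_of_pred f g : (set_of_pred f \subset set_of_pred g) = sub_pred f g.
Proof.
apply/subsetP/allP => [fg i | fg i]; rewrite ?inE.
- rewrite mem_iota add0n => /andP[_ lt_in]; apply/implyP => fi.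
  by have := fg (Ordinal lt_in); rewrite !inE; apply.
- by move=> fi; move: (fg i); rewrite mem_iota ltn_ord /= fi; apply.
Qed.

Lemma setD_set_of_pred f g :
  set_of_pred f :\: set_of_pred g = set_of_pred [pred i | f i && ~~ g i].
Proof. by apply/setP => i; rewrite !inE andbC. Qed.

Lemma rank_in_set_of_pred f i : rank_in (set_of_pred f) i = rank_pred f i.
Proof.
by rewrite /rank_in /rank_pred -card_set_of_pred; apply: eq_card => j; rewrite !inE.
Qed.

Lemma odd_part_set_of_pred f : odd_part (set_of_pred f) = set_of_pred (odd_pred f).
Proof. by apply/setP => i; rewrite !inE rank_in_set_of_pred. Qed.

Lemma even_part_set_of_pred f : even_part (set_of_pred f) = set_of_pred (even_pred f).
Proof. by apply/setP => i; rewrite !inE rank_in_set_of_pred. Qed.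

Definition alt_separated_pred (d : nat) (f g : pred nat) : bool :=
  let f_g := [pred i | f i && ~~ g i] in let g_f := [pred i | g i && ~~ f i] in
  ~~ has (fun c => let k := nth false c in (count k (iota 0 n) == d.+1) &&
            (sub_pred (odd_pred k) f_g && sub_pred (even_pred k) g_f
             || sub_pred (even_pred k) f_g && sub_pred (odd_pred k) g_f))
      (bitseqs n).

Lemma separated_set_of_pred d f g :
  separated (@alt_circuit n d) (set_of_pred f) (set_of_pred g) = alt_separated_pred d f g.
Proof.
rewrite separated_alt_circuitE; congr negb; apply/existsP/hasP => [[K]|[c _ /= fits]].
- have [c c_in ->] := set_of_bitsP K => fits; exists c => //.
  by rewrite card_set_of_pred odd_part_set_of_pred even_part_set_of_pred
    !setD_set_of_pred !subset_set_of_pred in fits.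
- exists (set_of_pred (nth false c)).
  by rewrite card_set_of_pred odd_part_set_of_pred even_part_set_of_pred
    !setD_set_of_pred !subset_set_of_pred.
Qed.

Definition bits_of_seq (l : seq nat) : bitseq := [seq i \in l | i <- iota 0 n].
Definition all_but (X : seq (seq nat)) : {set {set 'I_n}} :=
  ~: [set:: [seq set_of_pred [in l] | l <- X]].

Lemma mem_all_but X A : (A \in all_but X) = (bits_of A \notin map bits_of_seq X).
Proof.
rewrite !inE -(mem_map (can_inj bits_ofK)) -map_comp.
by congr (~~ (_ \in _)); apply: eq_map => l; rewrite /= bits_of_set_of_pred.
Qed.

Lemma card_all_but X : uniq (map bits_of_seq X) -> #|all_but X| = 2 ^ n - size X.
Proof.
move=> uniqX; set E := [seq set_of_pred [in l] | l <- X].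
have uniqE : uniq E.
  apply: (map_uniq (f := bits_of)); rewrite -map_comp; congr uniq: uniqX.
  by apply: eq_map => l; rewrite /= bits_of_set_of_pred.
have card_subsets : #|{set 'I_n}| = 2 ^ n.
  by rewrite -cardsT -powersetT card_powerset cardsT card_ord.
rewrite /all_but cardsCs setCK card_subsets -(size_map (fun l => set_of_pred [in l])) -/E.
by rewrite -(card_uniqP uniqE); congr (_ - _); apply: eq_card => A; rewrite inE.
Qed.

Lemma pairwise_separated_all_but d X :
  all (fun a => all (fun b =>
         [&& a \notin map bits_of_seq X, b \notin map bits_of_seq X & a != b] ==>
         alt_separated_pred d (nth false a) (nth false b)) (bitseqs n)) (bitseqs n) ->
  pairwise_separated (@alt_circuit n d) (all_but X).
Proof.
move=> /allP check; apply/forallP => A; apply/implyP => A_in.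
apply/forallP => B; apply/implyP => B_in; apply/implyP => neqAB.
rewrite -(bits_ofK A) -(bits_ofK B) separated_set_of_pred.
move/allP: (check _ (bits_of_bitseqs A)) => /(_ _ (bits_of_bitseqs B)) /implyP; apply.
by rewrite -!mem_all_but A_in B_in (can_eq bits_ofK).
Qed.

Lemma maxset_all_but d X :
  pairwise_separated (@alt_circuit n d) (all_but X) ->
  all (fun l => has (fun b => (b \notin map bits_of_seq X) &&
                       ~~ alt_separated_pred d [in l] (nth false b)) (bitseqs n)) X ->
  maxset (pairwise_separated (@alt_circuit n d)) (all_but X).
Proof.
move=> sepX /allP check; apply: maxset_pairwise_separated => // A.
rewrite !inE negbK => /mapP[l l_in ->].
have /hasP[b b_bits /andP[b_in nsep]] := check l l_in.
exists (set_of_pred (nth false b)); last by rewrite separated_set_of_pred.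
by rewrite mem_all_but bits_of_set_of_nth //; apply/eqP; rewrite -mem_bitseqs.
Qed.

End SubsetsAsPredicates.

Definition maximal_C64 : {set {set 'I_6}} :=
  all_but 6 [:: [:: 1; 3]; [:: 2; 4]; [:: 0; 2; 4]; [:: 0; 2; 5]; [:: 0; 3; 5];
                [:: 1; 2; 4]; [:: 1; 3; 4]; [:: 1; 3; 5]; [:: 0; 2; 3; 5]].

Definition larger_C64 : {set {set 'I_6}} :=
  all_but 6 [:: [:: 1; 4]; [:: 2; 4]; [:: 0; 2; 4]; [:: 0; 2; 5]; [:: 1; 2; 4];
                [:: 0; 2; 3; 5]; [:: 0; 2; 4; 5]].

Lemma maxset_maximal_C64 : maxset (pairwise_separated (@alt_circuit 6 4)) maximal_C64.
Proof. by apply: maxset_all_but; [apply: pairwise_separated_all_but|]; vm_compute. Qed.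

Lemma pairwise_separated_larger_C64 : pairwise_separated (@alt_circuit 6 4) larger_C64.
Proof. by apply: pairwise_separated_all_but; vm_compute. Qed.

Lemma card_maximal_C64 : #|maximal_C64| = 55.
Proof. by rewrite card_all_but. Qed.

Lemma card_larger_C64 : #|larger_C64| = 57.
Proof. by rewrite card_all_but. Qed.

Theorem lemma11p2 : ~ @pure 6 (@alt_circuit 6 4).
Proof.
move=> pure_C64.
have := pure_C64 _ maxset_maximal_C64 _ pairwise_separated_larger_C64.
by rewrite card_maximal_C64 card_larger_C64.
Qed.
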